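(* Consider the modified Ghaffari process described in the context, with marking decisions in each phase that are only pairwise independent. If phase $t$ is a type-2 golden phase for an undecided node $v$, i.e., $d_t(v)>1/4$ and $\sum_{u\in N(v),\, u \text{ light}} p_t(u)\ge d_t(v)/10$, then $v$ is removed in phase $t$ (i.e., $v$ or one of its undecided neighbors joins the independent set) with probability at least $1/160$.
   Context: Let $G=(V,E)$ be an undirected graph. The process runs in phases $t=0,1,2,\dots$ on the graph induced by the undecided nodes (initially all nodes); $N(v)$ denotes the set of undecided neighbors of $v$. Each undecided node $v$ has a value $p_t(v)$, with $p_0(v)=1/4$; its effective degree is $d_t(v)=\sum_{u\in N(v)}p_t(u)$. Then $p_{t+1}(v)=p_t(v)/2$ if $d_t(v)\ge 1/2$, and $p_{t+1}(v)=\min\{2p_t(v),1/4\}$ if $d_t(v)<1/2$. A node $u$ is light in phase $t$ if $d_t(u)<1/4$. In phase $t$, each undecided node $v$ becomes marked with probability $p_t(v)$, where the marking events of the nodes in phase $t$ are pairwise independent (given the state at the start of the phase); a marked node none of whose undecided neighbors is marked joins the independent set, and it and all its neighbors are removed. *)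

From HB Require Import structures.
From mathcomp Require Import all_boot all_order all_algebra.
From mathcomp Require Import all_classical all_reals all_analysis.
Set Implicit Arguments. Unset Strict Implicit. Unset Printing Implicit Defensive.
Import Order.TTheory GRing.Theory Num.Theory.
Local Open Scope ring_scope.

Section Ghaffari.
Variables (R : realType) (T : finType) (e : rel T).

Definition simple_graph := symmetric e /\ irreflexive e.

Definition eff_deg (U : {set T}) (p : T -> R) (v : T) : R :=
  \sum_(u in U | e v u) p u.

Definition light (U : {set T}) (p : T -> R) (u : T) : bool :=
  eff_deg U p u < 1/4.

Definition update (U : {set T}) (p : T -> R) : T -> R :=
  fun v => if 1/2 <= eff_deg U p v then p v / 2 else Num.min (2 * p v) (1/4).

Definition remove_join (U I : {set T}) : {set T} :=
  U :\: (I :|: [set y | [exists x in I, e x y]]).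

(* reachable t U p : (U, p) is a possible state (undecided set, values p_t)
   of the process at the start of phase t *)
Inductive reachable : nat -> {set T} -> (T -> R) -> Prop :=
| reach0 : reachable 0 [set: T] (fun _ => 1/4)
| reachS t U p (I : {set T}) :
    reachable t U p -> I \subset U ->
    (forall x y, x \in I -> y \in I -> ~~ e x y) ->
    reachable t.+1 (remove_join U I) (update U p).

Definition golden2 (U : {set T}) (p : T -> R) (v : T) : Prop :=
  1/4 < eff_deg U p v /\
  eff_deg U p v / 10 <= \sum_(u in U | e v u && light U p u) p u.

Local Open Scope classical_set_scope.

(* In the phase outcome omega, node u joins the independent set:
   u is marked and none of its undecided neighbours is marked. *)
Definition joins {Omega : Type} (U : {set T}) (M : T -> set Omega) (u : T)
  : set Omega :=
  [set w | M u w /\ (forall x, x \in U -> e u x -> ~ M x w)].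

Definition removed {Omega : Type} (U : {set T}) (M : T -> set Omega) (v : T)
  : set Omega :=
  [set w | exists u, [/\ u \in U, u = v \/ e v u & joins U M u w]].

End Ghaffari.

From HB Require Import structures.
From mathcomp Require Import all_boot all_order all_algebra.
From mathcomp Require Import all_classical all_reals all_analysis.
From mathcomp Require Import lra.
Import Order.TTheory GRing.Theory Num.Theory.
Local Open Scope classical_set_scope.
Local Open Scope ring_scope.

(* Among the light neighbours of v, whose total mass is at least d(v)/10 > 1/40,
   pick a set S of mass between 1/40 and 11/40; this is possible since every
   p(u) is at most 1/4.  For u in S, let A_u be the event that u is marked but
   no neighbour of u and no other member of S is.  Pairwise independence and a
   union bound give P(A_u) >= p(u) (1 - d(u) - p(S)) >= 19/40 p(u), as u is
   light.  The events A_u are disjoint, and on A_u the node u joins the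
   independent set, so v is removed with probability at least
   19/40 * 1/40 >= 1/160. *)

Lemma ler_sum_predU (R : numDomainType) (I : finType) (f : I -> R)
    (A B C : pred I) :
  (forall i, 0 <= f i) -> (forall i, A i -> B i || C i) ->
  \sum_(i | A i) f i <= \sum_(i | B i) f i + \sum_(i | C i) f i.
Proof.
move=> f_ge0 sub; rewrite !(big_mkcond _ f) -big_split /=; apply: ler_sum => i _.
have [/sub /orP[] -> | _] := boolP (A i).
- by rewrite lerDl; case: ifP.
- by rewrite lerDr; case: ifP.
- by rewrite addr_ge0 //; case: ifP.
Qed.

(* Take S minimal among the subsets of X of mass at least a: dropping any
   element of S falls below a. *)
Lemma exists_subset_sum_between {R : realDomainType} {T : finType} (w : T -> R)
    (X : {set T}) (a c : R) :
  0 < a -> (forall x, x \in X -> w x <= c) -> a <= \sum_(x in X) w x ->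
  exists2 S : {set T}, S \subset X & a <= \sum_(x in S) w x <= a + c.
Proof.
move=> a_gt0 w_le X_ge.
have [S /minsetP[/= S_ge S_min] SX] :=
  minset_exists (P := [pred S : {set T} | a <= \sum_(x in S) w x]) X_ge.
exists S; rewrite // S_ge /=.
have [x xS] : exists x, x \in S.
  apply/set0Pn; apply: contraTneq S_ge => ->.
  by rewrite big_set0 -ltNge.
have drop_x : \sum_(y in S :\ x) w y < a.
  rewrite ltNge; apply/negP => /S_min /(_ (subD1set S x)) /setP /(_ x).
  by rewrite !inE eqxx xS.
rewrite (big_setD1 x xS) addrC lerD ?(ltW drop_x) //.
exact/w_le/(fintype.subsetP SX).
Qed.

Lemma fsbig_finset (R : Type) (idx : R) (op : Monoid.com_law idx)
    (T : finType) (S : {set T}) (f : T -> R) :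
  \big[op/idx]_(i \in [set` S]) f i = \big[op/idx]_(i in S) f i.
Proof.
by rewrite [RHS](bigfs op (index_enum_uniq T)) // => i; rewrite mem_index_enum.
Qed.

Lemma measure_setD_bigcup_indep {d} {T : ringOfSetsType d} {R : realFieldType}
    (mu : {measure set T -> \bar R}) {I : finType} (D : {set I})
    (E : set T) (F : I -> set T) :
  measurable E -> (forall i, i \in D -> measurable (F i)) ->
  (forall i, i \in D -> mu (E `&` F i) = (mu E * mu (F i))%E) ->
  (mu E <= mu (E `\` \bigcup_(i in [set` D]) F i) + mu E * \sum_(i in D) mu (F i))%E.
Proof.
move=> mE mF indep.
have mUF := fin_bigcup_measurable finite_finset mF.
rewrite {1}(measureDI mu mE mUF) leeD2l // -fsbig_finset ge0_mule_fsumr //.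
under eq_fsbigr => i /set_mem Di do rewrite -indep //.
apply: content_sub_fsum => //; last by rewrite setI_bigcupr.
  by move=> i Di; apply: measurableI => //; apply: mF.
exact: measurableI.
Qed.

Definition rivals {T : finType} (e : rel T) (U S : {set T}) (u : T) : {set T} :=
  [set w in U | (w != u) && (e u w || (w \in S))].

Definition marked_alone {T : finType} {Omega : Type} (e : rel T) (U S : {set T})
    (M : T -> set Omega) (u : T) : set Omega :=
  M u `\` \bigcup_(w in [set` rivals e U S u]) M w.

Section GhaffariProcess.
Context {R : realType} {T : finType} {e : rel T}.

Lemma reachable_p_range {t U} {p : T -> R} :
  reachable e t U p -> forall x, 0 <= p x <= 1/4.
Proof.
elim=> [|{}t {}U {}p I _ IH _ _] x; first by lra.
have := IH x; rewrite /update; case: ifP => _ px; first by lra.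
by rewrite ge_min lexx orbT andbT le_min; apply/andP; split; lra.
Qed.

Lemma golden2_light_subset {U} {p : T -> R} {v} :
  (forall x, 0 <= p x <= 1/4) -> golden2 e U p v ->
  exists2 S : {set T}, S \subset [set u in U | e v u && light e U p u] &
    1/40 <= \sum_(u in S) p u <= 1/40 + 1/4.
Proof.
move=> p_range [deg_gt light_mass].
apply: (exists_subset_sum_between p _ _ (1/4)) => // [u _|].
  by case/andP: (p_range u).
under eq_bigl => u do rewrite inE.
lra.
Qed.

Lemma rivals_sub U S u : rivals e U S u \subset U :\ u.
Proof. by apply/fintype.subsetP => w; rewrite !inE => /and3P[-> -> _]. Qed.

Lemma sum_rivals_le {p : T -> R} U S u : (forall x, 0 <= p x) ->
  \sum_(w in rivals e U S u) p w <= eff_deg e U p u + \sum_(w in S) p w.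
Proof.
move=> p_ge0; apply: ler_sum_predU => // w.
by rewrite inE => /and3P[-> _ /orP[-> //|->]]; rewrite orbT.
Qed.

Lemma marked_alone_sub_joins {Omega : Type} {U S : {set T}} {M : T -> set Omega} {u} :
  irreflexive e -> marked_alone e U S M u `<=` joins e U M u.
Proof.
move=> e_irr o [Mu notM]; split=> // x xU ux Mx; apply: notM; exists x => //.
rewrite /= inE xU ux andbT /=; apply: contraTneq ux => ->.
by rewrite e_irr.
Qed.

Lemma trivIset_marked_alone {Omega : Type} {U S : {set T}} (M : T -> set Omega) :
  S \subset U -> trivIset [set` S] (marked_alone e U S M).
Proof.
move=> SU u w uS wS [x [[_ notM] [Mw _]]]; apply/eqP/negPn/negP => uw.
apply: notM; exists w => //=.
by rewrite inE (fintype.subsetP SU) //= eq_sym uw wS orbT.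
Qed.

Lemma measurable_removed {d} {Omega : measurableType d} {U : {set T}}
    {M : T -> set Omega} v :
  (forall u, u \in U -> measurable (M u)) -> measurable (removed e U M v).
Proof.
move=> mM.
have -> : removed e U M v = \bigcup_(u in [set u | u \in U /\ (u = v \/ e v u)])
    (M u `\` \bigcup_(x in [set x | x \in U /\ e u x]) M x).
  apply/seteqP; split=> o.
  - move=> [u [uU uv [Mu notM]]]; exists u => //; split=> // -[x [xU ux]].
    exact: notM.
  - move=> [u [uU uv] [Mu notM]]; exists u; split=> //; split=> // x xU ux Mx.
    by apply: notM; exists x.
apply: fin_bigcup_measurable => [|u [uU _]]; first exact: finite_finset.
apply: measurableD; first exact: mM.
by apply: fin_bigcup_measurable => [|x [xU _]]; [exact: finite_finset | exact: mM].
Qed.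

End GhaffariProcess.

Section PairwiseIndependentMarking.
Context {R : realType} {T : finType} {d : measure_display}
  {Omega : measurableType d} {P : probability Omega R}
  {U : {set T}} {M : T -> set Omega} {p : T -> R}.
Hypotheses (mM : forall u, u \in U -> measurable (M u))
  (PM : forall u, u \in U -> P (M u) = (p u)%:E)
  (indep : forall u w, u \in U -> w \in U -> u != w ->
     (P (M u `&` M w) = P (M u) * P (M w))%E).

Lemma marked_unrivalled_ge {W : {set T}} {u} : W \subset U :\ u -> u \in U ->
  ((p u * (1 - \sum_(w in W) p w))%:E <=
   P (M u `\` \bigcup_(w in [set` W]) M w))%E.
Proof.
move=> WU uU.
have Wu w : w \in W -> w \in U /\ w != u.
  by move/(fintype.subsetP WU); rewrite !inE => /andP[].
have mMW w : w \in W -> measurable (M w) by move=> /Wu[/mM].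
have indepW w : w \in W -> P (M u `&` M w) = (P (M u) * P (M w))%E.
  by move=> /Wu[wU wu]; rewrite indep // eq_sym.
(* Restated through the measure coercion of [P], which is the one appearing in
   [measure_setD_bigcup_indep]; otherwise the rewrites below do not match. *)
pose mu : {measure set Omega -> \bar R} := P.
have muM w : w \in U -> mu (M w) = (p w)%:E by exact: PM.
change ((p u * (1 - \sum_(w in W) p w))%:E <=
  mu (M u `\` \bigcup_(w in [set` W]) M w))%E.
have := measure_setD_bigcup_indep mu W (M u) M (mM u uU) mMW indepW.
rewrite muM // (eq_bigr (fun w => (p w)%:E)) => [|w /Wu[wU _]]; last exact: muM.
by rewrite sumEFin -EFinM mulrBr mulr1 EFinB leeBlDr.
Qed.

Lemma measurable_marked_alone (e : rel T) S u :
  u \in U -> measurable (marked_alone e U S M u).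
Proof.
move=> uU; apply: measurableD (mM u uU) (fin_bigcup_measurable finite_finset _).
by move=> w /(fintype.subsetP (rivals_sub U S u)); rewrite inE => /andP[_ /mM].
Qed.

Lemma marked_alone_light_ge (e : rel T) (S : {set T}) u :
  (forall x, 0 <= p x) -> u \in U -> light e U p u ->
  \sum_(w in S) p w <= 11/40 ->
  ((p u * (19/40))%:E <= P (marked_alone e U S M u))%E.
Proof.
move=> p_ge0 uU u_light S_le.
apply: le_trans (marked_unrivalled_ge (rivals_sub U S u) uU).
have rivals_le := sum_rivals_le (e := e) U S u p_ge0.
rewrite /light in u_light.
by rewrite lee_fin ler_wpM2l //; lra.
Qed.

End PairwiseIndependentMarking.

Theorem lemma4 (R : realType) (T : finType) (e : rel T)
  (t : nat) (U : {set T}) (p : T -> R) (v : T)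
  (d : measure_display) (Omega : measurableType d)
  (P : probability Omega R) (M : T -> set Omega) :
  simple_graph e ->
  reachable e t U p ->
  v \in U ->
  golden2 e U p v ->
  (forall u, u \in U -> measurable (M u)) ->
  (forall u, u \in U -> P (M u) = (p u)%:E) ->
  (forall u w, u \in U -> w \in U -> u != w ->
     (P (M u `&` M w) = P (M u) * P (M w))%E) ->
  ((1 / 160 : R)%:E <= P (removed e U M v))%E.
Proof.
move=> [_ e_irr] reach _ golden mM PM indep.
have p_range := reachable_p_range reach.
have p_ge0 x : 0 <= p x by case/andP: (p_range x).
have [S SL /andP[S_ge S_le]] := golden2_light_subset p_range golden.
have SP u : u \in S -> [/\ u \in U, e v u & light e U p u].
  by move/(fintype.subsetP SL); rewrite inE => /and3P[].
have SU : S \subset U by apply/fintype.subsetP => u /SP[].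
pose A := marked_alone e U S M.
have mA u : u \in S -> measurable (A u).
  by move=> /SP[uU _ _]; exact: measurable_marked_alone mM e S u uU.
have A_ge u : u \in S -> ((p u * (19/40))%:E <= P (A u))%E.
  move=> /SP[uU _ u_light].
  by apply: (marked_alone_light_ge mM PM indep e S u p_ge0 uU u_light); lra.
have A_removed : \bigcup_(u in [set` S]) A u `<=` removed e U M v.
  move=> o [u /SP[uU vu _] Ao]; exists u; split=> //; first by right.
  exact: marked_alone_sub_joins e_irr _ Ao.
have mUA : measurable (\bigcup_(u in [set` S]) A u).
  exact: fin_bigcup_measurable finite_finset mA.
have m_removed : measurable (removed e U M v) := measurable_removed v mM.
apply: le_trans (le_measure P (mem_set mUA) (mem_set m_removed) A_removed).
rewrite (measure_fin_bigcup P finite_finset (trivIset_marked_alone M SU) mA).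
rewrite fsbig_finset; apply: le_trans (lee_sum _ A_ge).
by rewrite sumEFin lee_fin -mulr_suml; lra.
Qed.
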